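(* Let designer $j$ have a participation objective with threshold $\theta_j\in[0,1]$ and budget $T_j>0$, and fix arbitrary prize structures for the other designers. Then the maximum of $\hat R_j(x_{\vec w_j},x_{-j}^{-1},\theta_j)$ over feasible prize structures $\vec w_j$ is attained by a simple contest $\vec w_j^{(k^*,T_j)}$ for some $k^*\in[n]$. Moreover, letting $\phi^*:=\Phi_j^*(\theta_j;x_{\vec w_j^{(k^*,T_j)}},x_{-j}^{-1})$, this $k^*$ satisfies $k^*\in\arg\max_{k\in[n]}\xi_k(\phi^* )$.
   Context: Model. There are $m\ge1$ contests/designers with budgets $T_j$, and $n\ge2$ contestants. Prize structures. A feasible prize structure is $\vec w_j$ with $w_{j,1}\ge\dots\ge w_{j,n}\ge0$ and $\sum_kw_{j,k}\le T_j$. Contestants. Contestant quantiles $q_i$ are i.i.d. $U[0,1]$ with skill $v(q_i)$, where $v$ is strictly decreasing. Contestants choose a contest and an effort; they are ranked by effort within the contest, the rank-$k$ participant gets $w_{j,k}$, and utility is skill times prize minus effort. Interim allocation function. $x_{\vec w_j}(\phi)=x_j(\phi)=\sum_kw_{j,k}\binom{n-1}{k-1}\phi^{k-1}(1-\phi)^{n-k}$. Inverse notation. $x_j^{-1}(y):=\max\{\phi\in[0,1]:x_j(\phi)\ge y\}$ (and $0$ if $x_j(0)<y$); $x_{-j}^{-1}:=\sum_{j'\ne j}x_{j'}^{-1}$; $Q:=x_j^{-1}+x_{-j}^{-1}$; $Q^{-1}(q):=\sup\{y:Q(y)\ge q\}$. Selected equilibrium participation. $\Phi_j^*(q;x_j,x_{-j}^{-1})$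 is the probability that a contestant has quantile $\le q$ and enters contest $j$. - It equals $x_j^{-1}(Q^{-1}(q))$ when $x_j$ is strictly decreasing. - When several contests have identical constant interim allocation functions with the maximal constant value, participants are divided equally among them. Precisely: if $M_1^*$ is that set, $x^*$ the common value, and $q^*=\min\{1,\sum_{j'\text{ strictly decreasing}}x_{j'}^{-1}(x^* )\}$, then each $j\in M_1^*$ has $\Phi_j^*(q)=\max\{0,q-q^*\}/|M_1^*|$. - Constant contests with smaller value get $\Phi_j^*\equiv0$. Participation objective. $\hat R_j(x_j,x_{-j}^{-1},\theta_j)=n\,\Phi_j^*(\theta_j;x_j,x_{-j}^{-1})$, the expected number of participants in contest $j$ with quantile $\le\theta_j$. Simple contests. $\vec w_j^{(k,T)}$ gives $T/k$ to each of ranks $1,\dots,k$ and $0$ to the rest. $\xi_k(\phi):=x_{\vec w^{(k,1)}}(\phi)=\frac1k\sum_{l=1}^k\binom{n-1}{l-1}\phi^{l-1}(1-\phi)^{n-l}$. *)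

From HB Require Import structures.
From mathcomp Require Import all_boot all_order all_algebra.
From mathcomp Require Import all_classical all_reals all_analysis.
Set Implicit Arguments. Unset Strict Implicit. Unset Printing Implicit Defensive.
Import Order.TTheory GRing.Theory Num.Theory.
Local Open Scope ring_scope.

Local Open Scope classical_set_scope.
Local Open Scope ereal_scope.

(* Feasible prize structure w : ranks 1..n (encoded as 'I_n, rank = i+1):
   w_1 >= ... >= w_n >= 0 and sum <= T. *)
Definition feasible (R : realType) (n : nat) (T : R) (w : 'I_n -> R) : Prop :=
  (forall i k : 'I_n, (i <= k)%N -> w k <= w i)%R /\
  (forall i : 'I_n, 0 <= w i)%R /\ (\sum_(i < n) w i <= T)%R.

(* Interim allocation function x_w(phi)
   = sum_k w_k C(n-1,k-1) phi^(k-1) (1-phi)^(n-k), with k = i+1. *)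
Definition xalloc (R : realType) (n : nat) (w : 'I_n -> R) (phi : R) : R :=
  (\sum_(i < n) w i * ('C(n.-1, i))%:R * phi ^+ i * (1 - phi) ^+ (n.-1 - i))%R.

Definition simple (R : realType) (n : nat) (T : R) (k : nat) : 'I_n -> R :=
  fun i => if (i < k)%N then (T / k%:R)%R else 0%R.

Definition xi (R : realType) (n : nat) (k : nat) : R -> R :=
  xalloc (@simple R n 1%R k).

(* x^{-1}(y) := max{phi in [0,1] : x(phi) >= y}, and 0 if x(0) < y.
   The argument y is an extended real (needed since Q^{-1}(0) = +oo).
   The max is written as the sup of the (closed, nonempty) set. *)
Definition xinv (R : realType) (x : R -> R) (y : \bar R) : R :=
  if (x 0%R)%:E < y then 0%R
  else sup [set phi : R | (0 <= phi <= 1)%R /\ y <= (x phi)%:E].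

Definition sdec (R : realType) (f : R -> R) : Prop :=
  forall a b : R, (0 <= a)%R -> (a < b)%R -> (b <= 1)%R -> (f b < f a)%R.

Definition Qfun (R : realType) (m n : nat) (W : 'I_m -> 'I_n -> R) (y : R) : R :=
  (\sum_(j' < m) xinv (xalloc (W j')) y%:E)%R.

Definition Qinv (R : realType) (m n : nat) (W : 'I_m -> 'I_n -> R) (q : R) : \bar R :=
  ereal_sup [set y%:E | y in [set y : R | (q <= Qfun W y)%R]].

Definition Phi (R : realType) (m n : nat) (W : 'I_m -> 'I_n -> R) (j : 'I_m) (q : R) : R :=
  if `[< sdec (xalloc (W j)) >] then xinv (xalloc (W j)) (Qinv W q)
  else
    let c := fun j' => xalloc (W j') 0%R in
    let inM1 := fun j' : 'I_m =>
      ~~ `[< sdec (xalloc (W j')) >] &&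
      `[< forall j'' : 'I_m, ~ sdec (xalloc (W j'')) -> (c j'' <= c j')%R >] in
    if inM1 j then
      let qs := Num.min 1%R
        (\sum_(j' < m | `[< sdec (xalloc (W j')) >]) xinv (xalloc (W j')) (c j)%:E)%R in
      (Num.max 0 (q - qs) / (#|[pred j' : 'I_m | inM1 j']|)%:R)%R
    else 0%R.

Definition upd (R : realType) (m n : nat) (W : 'I_m -> 'I_n -> R) (j : 'I_m)
  (w : 'I_n -> R) : 'I_m -> 'I_n -> R :=
  fun j' => if j' == j then w else W j'.

Definition Rhat (R : realType) (m n : nat) (W : 'I_m -> 'I_n -> R) (j : 'I_m) (theta : R) : R :=
  (n%:R * Phi W j theta)%R.
Arguments simple {R} n T k _.
Arguments xi {R} n k _.

From HB Require Import structures.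
From mathcomp Require Import all_boot all_order all_algebra.
From mathcomp Require Import all_classical all_reals all_analysis.
From mathcomp.algebra_tactics Require Import ring lra.
Set Implicit Arguments. Unset Strict Implicit. Unset Printing Implicit Defensive.
Import Order.TTheory GRing.Theory Num.Theory.
Import numFieldNormedType.Exports.
Local Open Scope classical_set_scope.
Local Open Scope ring_scope.

(* Summation by parts writes the allocation function of a nonincreasing prize vector [w] as
     x_w(phi) = sum_k (w_k - w_(k+1)) * k * xi_k(phi),
   so x_w is constant or strictly decreasing, and x_w(phi) <= T_j * max_k xi_k(phi) whenever
   [w] is feasible.  On the other hand, designer j's participation is monotone in the value
   her allocation function takes at her current participation level phi: a challenger that
   allocates at least as much at phi attracts participation at least phi (four cases,
   according as incumbent and challenger are strictly decreasing or constant).  Hence the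
   simple contest maximizing xi_k(phi) does at least as well as [w].  Applied to the best
   simple contest k1, with k* the least maximizer of xi_k at its participation level, this
   shows that k* is optimal and maximizes xi_k at its own participation level. *)

Section BinomialCdf.
Context {R : realFieldType}.
Implicit Types (a b p : R).

Definition bernstein (N i : nat) p : R := 'C(N, i)%:R * p ^+ i * (1 - p) ^+ (N - i).

(* [binom_cdf N r p] is the probability that a Binomial(N, p) variable is < r. *)
Definition binom_cdf (N r : nat) p : R := \sum_(i < r) bernstein N i p.

Lemma bernstein_ge0 N i p : 0 <= p <= 1 -> 0 <= bernstein N i p.
Proof.
move=> /andP[p0 p1]; rewrite /bernstein.
by rewrite !mulr_ge0 ?exprn_ge0 ?subr_ge0.
Qed.

Lemma bernsteinSS N i p :
  bernstein N.+1 i.+1 p = (1 - p) * bernstein N i.+1 p + p * bernstein N i p.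
Proof.
rewrite /bernstein binS subSS natrD.
have [iN|Ni] := ltnP i N.
  rewrite -(subnSK iN) !exprS; ring.
rewrite bin_small ?ltnS // (_ : N - i = 0)%N; last by apply/eqP; rewrite subn_eq0.
rewrite !expr0 exprS; ring.
Qed.

Lemma binom_cdfSS N r p :
  binom_cdf N.+1 r.+1 p = (1 - p) * binom_cdf N r.+1 p + p * binom_cdf N r p.
Proof.
rewrite /binom_cdf big_ord_recl [X in _ = _ * X + _]big_ord_recl.
have -> : bernstein N.+1 0 p = (1 - p) * bernstein N 0 p.
  by rewrite /bernstein !bin0 !subn0 exprS; ring.
under eq_bigr do rewrite /bump /= bernsteinSS.
rewrite big_split /= -!mulr_sumr; ring.
Qed.

Lemma binom_cdfS N r p : binom_cdf N r.+1 p = binom_cdf N r p + bernstein N r p.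
Proof. by rewrite /binom_cdf big_ord_recr. Qed.

Lemma binom_cdf_all N p : binom_cdf N N.+1 p = 1.
Proof.
elim: N => [|N IH]; first by rewrite /binom_cdf big_ord1 /bernstein bin0 !expr0 !mulr1.
by rewrite binom_cdfSS IH binom_cdfS IH /bernstein bin_small //; ring.
Qed.

Lemma binom_cdfSS_sub N r a b :
  binom_cdf N.+1 r.+1 a - binom_cdf N.+1 r.+1 b =
  (1 - b) * (binom_cdf N r.+1 a - binom_cdf N r.+1 b) +
  b * (binom_cdf N r a - binom_cdf N r b) + (b - a) * bernstein N r a.
Proof. rewrite !binom_cdfSS binom_cdfS; ring. Qed.

Lemma binom_cdf_nonincr N r a b : 0 <= a -> a <= b -> b <= 1 ->
  binom_cdf N r b <= binom_cdf N r a.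
Proof.
move=> a0 ab b1; elim: N r => [|N IH] [|r]; rewrite /binom_cdf ?big_ord0 //.
  by apply: ler_sum => -[[|i] ?] _; rewrite /bernstein ?bin0n ?mulr0 ?mul0r // !expr0.
rewrite -subr_ge0 -/(binom_cdf _ _ a) -/(binom_cdf _ _ b) binom_cdfSS_sub.
have h1 := IH r.+1; have h2 := IH r.
have hB : 0 <= bernstein N r a by rewrite bernstein_ge0 // a0 (le_trans ab b1).
have b0 : 0 <= b by exact: le_trans ab.
have e1 : 0 <= (1 - b) * (binom_cdf N r.+1 a - binom_cdf N r.+1 b).
  by rewrite mulr_ge0 // subr_ge0.
have e2 : 0 <= b * (binom_cdf N r a - binom_cdf N r b) by rewrite mulr_ge0 // subr_ge0.
have e3 : 0 <= (b - a) * bernstein N r a by rewrite mulr_ge0 // subr_ge0.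
lra.
Qed.

Lemma binom_cdf_decr N r a b : (1 <= r <= N)%N -> 0 <= a -> a < b -> b <= 1 ->
  binom_cdf N r b < binom_cdf N r a.
Proof.
move=> + a0 ab b1; elim: N r => [|N IH] [|r] //; rewrite !ltnS => /andP[_ rN].
rewrite -subr_gt0 binom_cdfSS_sub.
have b0 : 0 < b by exact: le_lt_trans ab.
have e1 : 0 <= (1 - b) * (binom_cdf N r.+1 a - binom_cdf N r.+1 b).
  by rewrite mulr_ge0 ?subr_ge0 // binom_cdf_nonincr // ltW.
have e2 : 0 <= b * (binom_cdf N r a - binom_cdf N r b).
  by rewrite mulr_ge0 ?subr_ge0 // ?binom_cdf_nonincr // ltW.
have e3 : 0 <= (b - a) * bernstein N r a.
  by rewrite mulr_ge0 ?bernstein_ge0 ?a0 ?(le_trans (ltW ab) b1) // subr_ge0 ltW.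
(* Either the last Bernstein term is positive, or [a = 0 < r] and induction applies. *)
have [a_pos_or_r0|] := boolP ((0 < a) || (r == 0)%N).
  suff : 0 < (b - a) * bernstein N r a by lra.
  rewrite mulr_gt0 ?subr_gt0 // /bernstein !mulr_gt0 ?ltr0n ?bin_gt0 //.
    by case/orP: a_pos_or_r0 => [|/eqP->]; [exact: exprn_gt0 | rewrite expr0].
  by apply: exprn_gt0; rewrite subr_gt0; exact: lt_le_trans b1.
rewrite negb_or -leNgt => /andP[_ r0].
suff : 0 < b * (binom_cdf N r a - binom_cdf N r b) by lra.
by rewrite mulr_gt0 // subr_gt0 IH // lt0n r0.
Qed.

End BinomialCdf.

Lemma sum_by_parts {R : comPzRingType} (w D : nat -> R) N :
  \sum_(i < N.+1) w i * D i =
  \sum_(k < N) (w k - w k.+1) * (\sum_(i < k.+1) D i) + w N * \sum_(i < N.+1) D i.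
Proof.
elim: N => [|N IH]; first by rewrite big_ord0 big_ord1 add0r big_ord1.
rewrite big_ord_recr /= IH [in RHS]big_ord_recr /= [\sum_(i < N.+2) D i]big_ord_recr /=.
ring.
Qed.

Lemma exists_descent {R : realDomainType} (f : nat -> R) i :
  f i < f 0%N -> exists2 k, (k < i)%N & f k.+1 < f k.
Proof.
elim: i => [|i IH]; first by rewrite ltxx.
move=> fi; have [hi|hi] := ltP (f i) (f 0%N).
  by have [k ki fk] := IH hi; exists k => //; rewrite ltnS ltnW.
by exists i => //; apply: lt_le_trans fi hi.
Qed.

Lemma psumr_gt0 (R : numDomainType) (I : finType) (F : I -> R) i0 :
  (forall i, 0 <= F i) -> 0 < F i0 -> 0 < \sum_i F i.
Proof. by move=> F0 Fi0; rewrite (bigD1 i0) //= ltr_wpDr // sumr_ge0. Qed.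

Section Allocation.
Context {R : realType} (N : nat).
Implicit Types (w : 'I_N.+1 -> R) (p : R).

Definition nonincreasing w := forall i k : 'I_N.+1, (i <= k)%N -> w k <= w i.

Definition prize w (k : nat) : R := w (inord k).

Lemma prize_nonincr w i k : nonincreasing w -> (i <= k <= N)%N -> prize w k <= prize w i.
Proof.
move=> w_nonincr /andP[ik kN]; apply: w_nonincr.
by rewrite !inordK // ltnS // (leq_trans ik kN).
Qed.

Lemma xalloc_bernstein w p : xalloc w p = \sum_(i < N.+1) prize w i * bernstein N i p.
Proof. by apply: eq_bigr => i _; rewrite /prize inord_val /bernstein !mulrA. Qed.

Lemma xalloc_by_parts w p : xalloc w p =
  \sum_(k < N) (prize w k - prize w k.+1) * binom_cdf N k.+1 p
  + prize w N * binom_cdf N N.+1 p.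
Proof. by rewrite xalloc_bernstein (sum_by_parts (prize w) (bernstein N ^~ p)). Qed.

Lemma sum_prizes_by_parts w : \sum_i w i =
  \sum_(k < N) (prize w k - prize w k.+1) * k.+1%:R + prize w N * N.+1%:R.
Proof.
have sum1 k : \sum_(i < k) (1 : R) = k%:R by rewrite sumr_const card_ord.
under eq_bigr => i _ do rewrite -[w i]mulr1 -[i in w i]inord_val.
by rewrite (sum_by_parts (prize w) (fun=> 1)); under eq_bigr do rewrite sum1; rewrite sum1.
Qed.

Lemma sub_xalloc_by_parts w p M : M * \sum_i w i - xalloc w p =
  \sum_(k < N) (prize w k - prize w k.+1) * (k.+1%:R * M - binom_cdf N k.+1 p)
  + prize w N * (N.+1%:R * M - binom_cdf N N.+1 p).
Proof.
rewrite xalloc_by_parts sum_prizes_by_parts mulrDr mulr_sumr opprD addrACA -sumrB.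
by congr (_ + _); [apply: eq_bigr => k _|]; ring.
Qed.

Lemma xalloc_simple (T : R) k p : (k <= N.+1)%N ->
  xalloc (simple N.+1 T k) p = T / k%:R * binom_cdf N k p.
Proof.
move=> kN; rewrite /xalloc /binom_cdf (big_ord_widen N.+1 (bernstein N ^~ p) kN).
rewrite mulr_sumr [in RHS]big_mkcond; apply: eq_bigr => i _ /=.
by rewrite /simple; case: ifP => _; rewrite ?mul0r // /bernstein !mulrA.
Qed.

Lemma xi_binom_cdf k p : (k <= N.+1)%N -> xi N.+1 k p = k%:R^-1 * binom_cdf N k p.
Proof. by move=> kN; rewrite /xi xalloc_simple // div1r. Qed.

Lemma xalloc_const w c p : (forall i, w i = c) -> xalloc w p = c.
Proof.
move=> wc; rewrite -[RHS]mulr1 -(binom_cdf_all N p) /binom_cdf mulr_sumr.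
by apply: eq_bigr => i _; rewrite wc /bernstein !mulrA.
Qed.

Lemma xalloc_continuous w : continuous (xalloc w).
Proof.
suff -> : xalloc w = horner (\sum_(i < N.+1)
    ((w i * 'C(N, i)%:R)%:P * 'X^i * (1 - 'X) ^+ (N - i))) by exact: continuous_horner.
by apply: funext => p; rewrite horner_sum; apply: eq_bigr => i _; rewrite !hornerE.
Qed.

Lemma nonconst_descent w : nonincreasing w -> (exists i, w i != w ord0) ->
  exists2 k, (k < N)%N & prize w k.+1 < prize w k.
Proof.
move=> w_nonincr [i wi]; have [|k ki] := @exists_descent _ (prize w) i.
  rewrite /prize inord_val (_ : inord 0 = ord0); last exact/val_inj/inordK.
  by rewrite lt_neqAle wi w_nonincr.
by exists k => //; apply: leq_trans ki _; rewrite -ltnS.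
Qed.

Lemma xalloc_sdec w : nonincreasing w -> (exists i, w i != w ord0) -> sdec (xalloc w).
Proof.
move=> w_nonincr w_nonconst a b a0 ab b1.
rewrite -subr_gt0 !xalloc_by_parts !binom_cdf_all opprD addrACA subrr addr0 -sumrB.
have [k kN wk] := nonconst_descent w_nonincr w_nonconst.
apply: (psumr_gt0 (i0 := Ordinal kN)) => [i|]; rewrite -mulrBr.
- by rewrite mulr_ge0 // subr_ge0 ?prize_nonincr ?binom_cdf_nonincr ?(ltW ab) //= leqnSn ltn_ord.
- by rewrite mulr_gt0 ?subr_gt0 // binom_cdf_decr // ltnS ltnW.
Qed.

Lemma xalloc_le_sum w p M : nonincreasing w -> (forall i, 0 <= w i) ->
  (forall k, (1 <= k <= N.+1)%N -> binom_cdf N k p <= k%:R * M) ->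
  xalloc w p <= M * \sum_i w i.
Proof.
move=> w_nonincr w0 cdf_le; rewrite -subr_ge0 sub_xalloc_by_parts.
rewrite addr_ge0 ?mulr_ge0 ?subr_ge0 ?cdf_le ?w0 /= ?leqnn //.
apply: sumr_ge0 => k _.
by rewrite mulr_ge0 ?subr_ge0 ?cdf_le ?prize_nonincr ?leqnSn //= ltnS ltnW.
Qed.

Lemma xalloc_lt_sum w p M : nonincreasing w -> (forall i, 0 <= w i) ->
  (exists i, w i != w ord0) ->
  (forall k, (1 <= k <= N)%N -> binom_cdf N k p < k%:R * M) ->
  binom_cdf N N.+1 p <= N.+1%:R * M ->
  xalloc w p < M * \sum_i w i.
Proof.
move=> w_nonincr w0 w_nonconst cdf_lt cdf_le; rewrite -subr_gt0 sub_xalloc_by_parts.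
rewrite ltr_pwDl ?mulr_ge0 ?subr_ge0 ?w0 //.
have [k kN wk] := nonconst_descent w_nonincr w_nonconst.
apply: (psumr_gt0 (i0 := Ordinal kN)) => [i|].
  by rewrite mulr_ge0 ?subr_ge0 ?prize_nonincr ?leqnSn ?ltn_ord // ltW // cdf_lt ?ltn_ord.
by rewrite mulr_gt0 ?subr_gt0 // cdf_lt.
Qed.

End Allocation.

Section InverseAllocation.
Context {R : realType}.
Implicit Types (f : R -> R) (y : \bar R).

Definition superlevel f y : set R := [set phi | 0 <= phi <= 1 /\ (y <= (f phi)%:E)%E].

Lemma superlevel_ub f y : ubound (superlevel f y) 1.
Proof. by move=> z [/andP[_ ->]]. Qed.

Lemma superlevel0 f y : (y <= (f 0)%:E)%E -> superlevel f y 0.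
Proof. by split; rewrite ?lexx ?ler01. Qed.

Lemma superlevel_has_sup f y : (y <= (f 0)%:E)%E -> has_sup (superlevel f y).
Proof. by move=> y_le; split; [exists 0; exact: superlevel0 | exists 1; exact: superlevel_ub]. Qed.

Lemma xinvE f y : (y <= (f 0)%:E)%E -> xinv f y = sup (superlevel f y).
Proof. by rewrite /xinv leNgt => /negbTE ->. Qed.

Lemma xinv_gtE f y : ((f 0)%:E < y)%E -> xinv f y = 0.
Proof. by rewrite /xinv => ->. Qed.

Lemma xinv_ge f y phi : 0 <= phi <= 1 -> (y <= (f phi)%:E)%E -> (y <= (f 0)%:E)%E ->
  phi <= xinv f y.
Proof.
move=> phi01 y_le y_le0; rewrite xinvE //.
by apply: sup_upper_bound; [exact: superlevel_has_sup | split].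
Qed.

Lemma xinv_ge0 f y : 0 <= xinv f y.
Proof.
have [/xinv_gtE -> //|y_le] := ltP (f 0)%:E y.
by apply: xinv_ge; rewrite ?lexx ?ler01.
Qed.

Lemma xinv_le1 f y : xinv f y <= 1.
Proof.
have [/xinv_gtE -> |y_le] := ltP (f 0)%:E y; first exact: ler01.
rewrite xinvE //; apply: ge_sup; [exists 0; exact: superlevel0 | exact: superlevel_ub].
Qed.

Lemma xinv_nonincr f (y1 y2 : R) : y1 <= y2 -> xinv f y2%:E <= xinv f y1%:E.
Proof.
move=> y12; have [/xinv_gtE -> |y2_le] := ltP (f 0)%:E y2%:E; first exact: xinv_ge0.
have y1_le : (y1%:E <= (f 0)%:E)%E by apply: le_trans y2_le; rewrite lee_fin.
rewrite !xinvE //; apply: ge_sup; first by exists 0; exact: superlevel0.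
move=> z [z01 z_le]; apply: sup_upper_bound; first exact: superlevel_has_sup.
by split => //; apply: le_trans z_le; rewrite lee_fin.
Qed.

Lemma continuous_dist_lt f (x e : R) : continuous f -> 0 < e ->
  exists2 d : R, 0 < d & forall t, `|x - t| < d -> `|f x - f t| < e.
Proof.
move=> f_cont e0; have fx : f @ x --> f x := f_cont x.
have := @cvgr_dist_lt _ _ _ _ _ f (f x) fx e e0.
by move=> near_fx; have [d /= d0 fd] := iffLR (nbhs_ballP _ _) (near_fx _); exists d.
Qed.

Lemma xinv_attained f (y : R) : continuous f -> y <= f 0 -> y <= f (xinv f y%:E).
Proof.
move=> f_cont y_le; rewrite xinvE ?lee_fin //; set s := sup _.
have s_sup : has_sup (superlevel f y%:E) by apply: superlevel_has_sup; rewrite lee_fin.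
rewrite leNgt; apply/negP => fs_lt.
have [d d0 fd] : exists2 d : R, 0 < d & forall t, `|s - t| < d -> `|f s - f t| < y - f s.
  by apply: continuous_dist_lt; rewrite // subr_gt0.
have [psi psi_in s_psi] := sup_adherent d0 s_sup; rewrite -/s in s_psi.
have psi_s : psi <= s by exact: sup_upper_bound s_sup _ psi_in.
case: psi_in => _ y_le_psi.
have := fd psi; rewrite ger0_norm ?subr_ge0 // => /(_ ltac:(lra)).
by rewrite ltr_norml lee_fin in y_le_psi *; lra.
Qed.

Lemma xinv_lt f (y phi : R) : continuous f -> sdec f -> 0 < phi <= 1 -> f phi < y ->
  xinv f y%:E < phi.
Proof.
move=> f_cont f_sdec /andP[phi0 phi1] f_lt.
have [/xinv_gtE -> //|y_le] := ltP (f 0)%:E y%:E.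
rewrite lee_fin in y_le; have y_le_f := xinv_attained f_cont y_le.
rewrite ltNge; apply/negP; rewrite le_eqVlt => /orP[/eqP phi_eq|phi_lt].
  by move: y_le_f; rewrite -phi_eq; lra.
by have := f_sdec _ _ (ltW phi0) phi_lt (xinv_le1 f y%:E); lra.
Qed.

Lemma xinv_const f c (y : R) : (forall p, f p = c) -> y <= c -> xinv f y%:E = 1.
Proof.
move=> fc y_le; apply/eqP; rewrite eq_le xinv_le1 /=.
by apply: xinv_ge; rewrite ?lexx ?ler01 // !fc lee_fin.
Qed.

Lemma const_not_sdec (c : R) : ~ sdec (fun=> c).
Proof. by move=> c_sdec; have := c_sdec 0 1 (lexx _) ltr01 (lexx _); rewrite ltxx. Qed.

End InverseAllocation.

Lemma ler_sum_cond (R : numDomainType) (I : finType) (P1 P2 : pred I) (F1 F2 : I -> R) :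
  (forall i, (if P1 i then F1 i else 0) <= (if P2 i then F2 i else 0)) ->
  \sum_(i | P1 i) F1 i <= \sum_(i | P2 i) F2 i.
Proof. by move=> F12; rewrite big_mkcond [X in _ <= X]big_mkcond; apply: ler_sum. Qed.

Lemma div_natr_le (R : numFieldType) (x : R) K : 0 <= x -> (1 <= K)%N -> x / K%:R <= x.
Proof.
move=> x0 K1; rewrite ler_pdivrMr ?ltr0n //.
by rewrite -[X in X <= _]mulr1 ler_wpM2l // ler1n.
Qed.

(* [Phi W] depends on [W] only through the allocation functions [xalloc (W j')]
   (lemma [PhiE_alloc]), so the participation model is restated for any profile [X]. *)
Section Participation.
Context {R : realType} {m : nat}.
Implicit Types (X : 'I_m -> R -> R) (f g : R -> R) (j : 'I_m).

Definition Qalloc X (y : R) : R := \sum_(j' < m) xinv (X j') y%:E.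

Definition Qinv_alloc X (q : R) : \bar R :=
  ereal_sup [set y%:E | y in [set y : R | q <= Qalloc X y]].

Definition in_top_const X j' : bool :=
  ~~ `[< sdec (X j') >] && `[< forall j'', ~ sdec (X j'') -> X j'' 0 <= X j' 0 >].

Definition sdec_inv_sum X (y : R) : R :=
  \sum_(j' < m | `[< sdec (X j') >]) xinv (X j') y%:E.

Definition Phi_alloc X j (q : R) : R :=
  if `[< sdec (X j) >] then xinv (X j) (Qinv_alloc X q)
  else if in_top_const X j then
    Num.max 0 (q - Num.min 1 (sdec_inv_sum X (X j 0))) / #|[pred j' | in_top_const X j']|%:R
  else 0.

Definition upd_alloc X j f : 'I_m -> R -> R := fun j' => if j' == j then f else X j'.

Definition other_inv_sum X j (y : R) : R := \sum_(j' < m | j' != j) xinv (X j') y%:E.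

Definition other_nonsdec_const X j :=
  forall j', j' != j -> ~ sdec (X j') -> forall p, X j' p = X j' 0.

Lemma PhiE_alloc n (W : 'I_m -> 'I_n -> R) j q :
  Phi W j q = Phi_alloc (fun j' => xalloc (W j')) j q.
Proof. by []. Qed.

Lemma upd_allocE n (W : 'I_m -> 'I_n -> R) j w :
  (fun j' => xalloc (upd W j w j')) = upd_alloc (fun j' => xalloc (W j')) j (xalloc w).
Proof. by apply: funext => j'; rewrite /upd /upd_alloc; case: eqP. Qed.

Lemma upd_alloc_self X j f : upd_alloc X j f j = f.
Proof. by rewrite /upd_alloc eqxx. Qed.

Lemma upd_alloc_other X j f j' : j' != j -> upd_alloc X j f j' = X j'.
Proof. by rewrite /upd_alloc => /negbTE ->. Qed.

Lemma Qalloc_upd X j f y : Qalloc (upd_alloc X j f) y = xinv f y%:E + other_inv_sum X j y.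
Proof.
rewrite /Qalloc (bigD1 j) //= upd_alloc_self; congr (_ + _).
by apply: eq_bigr => j' j'j; rewrite upd_alloc_other.
Qed.

Lemma Qalloc_ge X (y : R) j' : xinv (X j') y%:E <= Qalloc X y.
Proof. by rewrite /Qalloc (bigD1 j') //= lerDl sumr_ge0 // => i _; exact: xinv_ge0. Qed.

Lemma other_inv_sum_ge0 X j y : 0 <= other_inv_sum X j y.
Proof. by apply: sumr_ge0 => j' _; exact: xinv_ge0. Qed.

Lemma other_inv_sum_nonincr X j (y1 y2 : R) :
  y1 <= y2 -> other_inv_sum X j y2 <= other_inv_sum X j y1.
Proof. by move=> y12; apply: ler_sum => j' _; exact: xinv_nonincr. Qed.

Lemma sdec_inv_sum_ge0 X y : 0 <= sdec_inv_sum X y.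
Proof. by apply: sumr_ge0 => j' _; exact: xinv_ge0. Qed.

Lemma Phi_alloc_ge0 X j q : 0 <= Phi_alloc X j q.
Proof.
rewrite /Phi_alloc; case: ifP => _; first exact: xinv_ge0.
by case: ifP => // _; rewrite divr_ge0 ?le_max ?lexx.
Qed.

Lemma Phi_alloc_sdec X j f q :
  sdec f -> Phi_alloc (upd_alloc X j f) j q = xinv f (Qinv_alloc (upd_alloc X j f) q).
Proof. by move=> f_sdec; rewrite /Phi_alloc upd_alloc_self asboolT. Qed.

Lemma Phi_alloc_const_top X j (c : R) :
  (forall j', j' != j -> ~ sdec (X j') -> X j' 0 < c) ->
  Phi_alloc (upd_alloc X j (fun=> c)) j
  =1 fun q => Num.max 0 (q - Num.min 1 (sdec_inv_sum (upd_alloc X j (fun=> c)) c)).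
Proof.
move=> others_lt q; set Xc := upd_alloc X j _.
have Xc_j : Xc j = fun=> c by rewrite /Xc upd_alloc_self.
have c_nsdec := @const_not_sdec R c.
have top_j : in_top_const Xc j.
  rewrite /in_top_const Xc_j asboolF //=; apply/asboolP => j'' j''_nsdec.
  have [->|j''j] := eqVneq j'' j; first by rewrite Xc_j.
  by move: j''_nsdec; rewrite /Xc upd_alloc_other // => /(others_lt _ j''j)/ltW.
have card_top : #|[pred j' | in_top_const Xc j']| = 1%N.
  rewrite -(card1 j); apply: eq_card => j'; rewrite !inE.
  have [->|j'j] := eqVneq j' j; first by rewrite top_j.
  apply/negbTE; rewrite /in_top_const negb_and; apply/orP.
  case: (asboolP (sdec (Xc j'))) => [_|j'_nsdec]; [by left | right].
  apply/asboolP => /(_ j); rewrite Xc_j => /(_ c_nsdec).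
  by move: j'_nsdec; rewrite /Xc upd_alloc_other // => /(others_lt _ j'j); rewrite ltNge => /negP.
by rewrite /Phi_alloc Xc_j asboolF //= top_j card_top divr1.
Qed.

Lemma Qinv_alloc_sdec X j f th : th <= 1 -> sdec f -> continuous f ->
  0 < Phi_alloc (upd_alloc X j f) j th ->
  exists ys : R, [/\ Qinv_alloc (upd_alloc X j f) th = ys%:E,
    ys <= f (Phi_alloc (upd_alloc X j f) j th) &
    forall y, ys < y -> Qalloc (upd_alloc X j f) y < th].
Proof.
move=> th1 f_sdec f_cont; rewrite Phi_alloc_sdec //; set Y := Qinv_alloc _ th => Phi_gt0.
have Y_le : (Y <= (f 0)%:E)%E.
  by rewrite leNgt; apply/negP => /xinv_gtE Y0; rewrite Y0 ltxx in Phi_gt0.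
have ge_Y : ((f 1)%:E <= Y)%E.
  apply: ereal_sup_ubound; exists (f 1) => //=.
  have f1_le : f 1 <= f 0 by apply/ltW/f_sdec; rewrite ?lexx ?ltr01.
  rewrite Qalloc_upd (_ : xinv f (f 1)%:E = 1).
    by apply: le_trans th1 _; rewrite lerDl other_inv_sum_ge0.
  by apply/eqP; rewrite eq_le xinv_le1 xinv_ge ?lee_fin ?lexx ?ler01.
have [ys Y_ys] : exists ys : R, Y = ys%:E.
  by case: Y Y_le ge_Y {Phi_gt0} => [ys _ _| // | //]; exists ys.
exists ys; split => // [|y ys_y].
  by rewrite Y_ys xinv_attained // -lee_fin -Y_ys.
rewrite ltNge; apply/negP => th_le.
have : (y%:E <= Y)%E by apply: ereal_sup_ubound; exists y.
by rewrite Y_ys lee_fin leNgt ys_y.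
Qed.

(* The contests other than [j] cannot absorb more than [th - p] at any value above [f p]:
   otherwise, by continuity, [Q] would reach [th] strictly above [Qinv_alloc th]. *)
Lemma other_inv_sum_lt X j f th : th <= 1 -> sdec f -> continuous f ->
  let p := Phi_alloc (upd_alloc X j f) j th in 0 < p ->
  forall y psi, f p < y -> psi < p -> other_inv_sum X j y < th - psi.
Proof.
move=> th1 f_sdec f_cont p p_gt0 y psi fp_lt psi_lt.
have [ys [_ ys_le Q_lt]] := Qinv_alloc_sdec th1 f_sdec f_cont p_gt0.
have p1 : p <= 1 by rewrite /p Phi_alloc_sdec // xinv_le1.
have [d d0 fd] : exists2 d : R, 0 < d & forall t, `|p - t| < d -> `|f p - f t| < y - f p.
  by apply: continuous_dist_lt; rewrite // subr_gt0.
set lb := Num.max (Num.max psi 0) (p - d).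
have lb_lt : lb < p by rewrite !gt_max psi_lt p_gt0 /=; lra.
have lb_ge : [/\ psi <= lb, 0 <= lb & p - d <= lb] by rewrite !le_max !lexx !orbT.
case: lb_ge => psi_lb lb0 pd_lb; set q := (lb + p) / 2.
have fq_lt : f q < y.
  have := fd q; rewrite ger0_norm ?subr_ge0 ?ltr_norml; last by rewrite /q; lra.
  by case/(_ ltac:(rewrite /q; lra))/andP; lra.
have fpq : f p < f q by apply: f_sdec; rewrite /q; lra.
have := Q_lt (f q) ltac:(lra); rewrite Qalloc_upd.
have : q <= xinv f (f q)%:E.
  by apply: xinv_ge; rewrite ?lee_fin ?lexx // ?(ltW (f_sdec _ _ _ _ _)) //; rewrite /q; lra.
have : other_inv_sum X j y <= other_inv_sum X j (f q) by apply: other_inv_sum_nonincr; lra.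
rewrite /q; lra.
Qed.

Lemma Phi_alloc_sdec_ge X j g th p : sdec g -> continuous g -> 0 < p <= 1 ->
  (forall y psi, g p < y -> psi < p -> other_inv_sum X j y < th - psi) ->
  p <= Phi_alloc (upd_alloc X j g) j th.
Proof.
move=> g_sdec g_cont /andP[p_gt0 p1] others_lt; rewrite Phi_alloc_sdec //.
have gp_le : g p <= g 0 by apply/ltW/g_sdec; rewrite ?lexx.
have Qinv_le : (Qinv_alloc (upd_alloc X j g) th <= (g p)%:E)%E.
  apply: ge_ereal_sup => _ [y th_le <-]; rewrite lee_fin leNgt; apply/negP => gp_lt.
  have := others_lt y _ gp_lt (xinv_lt g_cont g_sdec _ gp_lt); rewrite p_gt0 p1 => /(_ isT).
  by move: th_le; rewrite /= Qalloc_upd; lra.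
by apply: xinv_ge; rewrite ?(ltW p_gt0) ?p1 // (le_trans Qinv_le) ?lee_fin.
Qed.

Lemma Phi_le_sdec_sdec X j f g th : th <= 1 ->
  sdec f -> continuous f -> sdec g -> continuous g ->
  f (Phi_alloc (upd_alloc X j f) j th) <= g (Phi_alloc (upd_alloc X j f) j th) ->
  Phi_alloc (upd_alloc X j f) j th <= Phi_alloc (upd_alloc X j g) j th.
Proof.
move=> th1 f_sdec f_cont g_sdec g_cont; set p := Phi_alloc _ j th => fg.
have [p_le0|p_gt0] := leP p 0; first exact: le_trans p_le0 (Phi_alloc_ge0 _ _ _).
apply: Phi_alloc_sdec_ge => //; first by rewrite p_gt0 /p Phi_alloc_sdec // xinv_le1.
move=> y psi gp_lt; apply: other_inv_sum_lt => //; exact: le_lt_trans gp_lt.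
Qed.

Lemma Phi_le_sdec_const X j f (c : R) th : th <= 1 -> other_nonsdec_const X j ->
  sdec f -> continuous f -> f (Phi_alloc (upd_alloc X j f) j th) < c ->
  Phi_alloc (upd_alloc X j f) j th <= Phi_alloc (upd_alloc X j (fun=> c)) j th.
Proof.
move=> th1 others_const f_sdec f_cont; set p := Phi_alloc _ j th => fp_lt.
have [p_le0|p_gt0] := leP p 0; first exact: le_trans p_le0 (Phi_alloc_ge0 _ _ _).
have [ys [_ ys_le Q_lt]] := Qinv_alloc_sdec th1 f_sdec f_cont p_gt0.
rewrite Phi_alloc_const_top; last first.
  move=> j' j'j j'_nsdec; rewrite ltNge; apply/negP => c_le.
  have := Q_lt (X j' 0) ltac:(lra); apply/negP; rewrite -leNgt.
  apply: le_trans (Qalloc_ge _ _ j').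
  by rewrite upd_alloc_other // (xinv_const (others_const _ _ _)).
set S := sdec_inv_sum _ c.
have S_le : S <= other_inv_sum X j c.
  apply: ler_sum_cond => i; case: (asboolP (sdec _)) => [i_sdec|_].
    have [ij|ij] := eqVneq i j; last by rewrite upd_alloc_other.
    by rewrite ij upd_alloc_self in i_sdec; case: (const_not_sdec i_sdec).
  by case: ifP => _; rewrite ?xinv_ge0.
have others_le : other_inv_sum X j c <= th - p.
  rewrite leNgt; apply/negP => lt_others.
  have := other_inv_sum_lt th1 f_sdec f_cont p_gt0 fp_lt (psi := th - other_inv_sum X j c).
  by rewrite -/p; lra.
have min_le : Num.min 1 S <= S by rewrite ge_min lexx orbT.
by rewrite le_max; apply/orP; right; lra.
Qed.

Lemma Phi_le_const_sdec X j (a : R) g th : 0 <= th <= 1 -> sdec g -> continuous g ->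
  a <= g (Phi_alloc (upd_alloc X j (fun=> a)) j th) ->
  Phi_alloc (upd_alloc X j (fun=> a)) j th <= Phi_alloc (upd_alloc X j g) j th.
Proof.
move=> /andP[th0 th1] g_sdec g_cont; set Xa := upd_alloc X j _; set p := Phi_alloc Xa j th.
move=> a_le; have [p_le0|p_gt0] := leP p 0; first exact: le_trans p_le0 (Phi_alloc_ge0 _ _ _).
have Xa_j : Xa j = fun=> a by rewrite /Xa upd_alloc_self.
have : p = if in_top_const Xa j then Num.max 0 (th - Num.min 1 (sdec_inv_sum Xa a))
             / #|[pred j' | in_top_const Xa j']|%:R else 0.
  by rewrite /p /Phi_alloc Xa_j asboolF //; exact: const_not_sdec.
case: ifPn => [top_j|_ p0]; last by rewrite p0 ltxx in p_gt0.
set S := sdec_inv_sum _ _ => p_eq.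
have p_le : p <= Num.max 0 (th - Num.min 1 S).
  by rewrite p_eq div_natr_le ?le_max ?lexx //; apply/card_gt0P; exists j.
have [p_le_S S_lt1] : p <= th - S /\ S < 1.
  have [S1|S1] := leP 1 S; first by move: p_le; rewrite (min_idPl S1) (max_idPl _) //; lra.
  by move: p_le; rewrite (min_idPr (ltW S1)) le_max => /orP[]; lra.
have S0 : 0 <= S by exact: sdec_inv_sum_ge0.
apply: Phi_alloc_sdec_ge => //; first by rewrite p_gt0 /=; lra.
move=> y psi gp_lt psi_lt; suff : other_inv_sum X j y <= S by lra.
apply: ler_sum_cond => i; have [->|ij] := eqVneq i j.
  by rewrite /= Xa_j asboolF //; exact: const_not_sdec.
rewrite /Xa upd_alloc_other //; case: (asboolP (sdec (X i))) => [_|i_nsdec].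
  by apply: xinv_nonincr; lra.
rewrite xinv_gtE // lte_fin; move: top_j => /andP[_ /asboolP /(_ i)].
by rewrite Xa_j /Xa upd_alloc_other // => /(_ i_nsdec); lra.
Qed.

Lemma Phi_le_const_const X j (a c : R) th : a <= c ->
  Phi_alloc (upd_alloc X j (fun=> a)) j th <= Phi_alloc (upd_alloc X j (fun=> c)) j th.
Proof.
rewrite le_eqVlt => /orP[/eqP-> //|a_lt].
set Xa := upd_alloc X j (fun=> a); set Xc := upd_alloc X j (fun=> c).
have Xa_j : Xa j = fun=> a by rewrite /Xa upd_alloc_self.
rewrite {1}/Phi_alloc Xa_j asboolF /=; last exact: const_not_sdec.
case: ifPn => [top_j|_]; last exact: Phi_alloc_ge0.
rewrite Phi_alloc_const_top; last first.
  move=> j' j'j j'_nsdec; move: top_j => /andP[_ /asboolP /(_ j')].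
  by rewrite Xa_j /Xa upd_alloc_other // => /(_ j'_nsdec); lra.
have top_card : (0 < #|[pred j' | in_top_const Xa j']|)%N by apply/card_gt0P; exists j.
apply: le_trans (div_natr_le _ top_card) _; first by rewrite le_max lexx.
apply: le_max2 => //; rewrite lerD2l lerN2; apply: le_min2 => //.
apply: ler_sum_cond => i; have [->|ij] := eqVneq i j.
  by rewrite Xa_j /Xc upd_alloc_self !asboolF //; exact: const_not_sdec.
rewrite /Xa /Xc !upd_alloc_other //; case: ifP => _ //.
by apply: xinv_nonincr; exact: ltW.
Qed.

End Participation.

Definition least_argmax (R : realDomainType) (F : nat -> R) K k := [/\ (1 <= k <= K)%N,
  forall k', (1 <= k' <= K)%N -> F k' <= F k & forall k', (1 <= k' < k)%N -> F k' < F k].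

Lemma exists_least_argmax (R : realDomainType) (F : nat -> R) K :
  (1 <= K)%N -> exists k, least_argmax F K k.
Proof.
elim: K => [//|K IH _]; case: K IH => [_|K IH].
  exists 1%N; split=> // k' /andP[k'1 k'_le1]; last by rewrite ltnNge k'1 in k'_le1.
  by rewrite (_ : k' = 1%N) //; apply/eqP; rewrite eqn_leq k'1 k'_le1.
have [k [/andP[k1 kK] k_max k_least]] := IH isT.
have [Fk_lt|FK_le] := ltP (F k) (F K.+2).
  exists K.+2; split=> [|k' /andP[k'1]|k' /andP[k'1 k'_lt]]; first by rewrite leqnn.
    rewrite leq_eqVlt ltnS; case/orP => [/eqP-> //|k'K].
    by apply/ltW/(le_lt_trans _ Fk_lt)/k_max; rewrite k'1.
  by apply/(le_lt_trans _ Fk_lt)/k_max; rewrite k'1 -ltnS.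
exists k; split=> [|k' /andP[k'1]|//]; first by rewrite k1 ltnW.
by rewrite leq_eqVlt ltnS; case/orP => [/eqP->|k'K] //; apply: k_max; rewrite k'1.
Qed.

Section SimpleContests.
Context {R : realType} (N : nat) (T : R).
Hypothesis T_gt0 : 0 < T.

Lemma simple_nonincreasing k : nonincreasing (simple N.+1 T k).
Proof.
move=> i i' ii'; rewrite /simple; case: ifP => i'k; first by rewrite (leq_ltn_trans ii' i'k).
by case: ifP => // _; rewrite divr_ge0 ?ler0n ?(ltW T_gt0).
Qed.

Lemma simple_ge0 k i : 0 <= simple N.+1 T k i.
Proof. by rewrite /simple; case: ifP => // _; rewrite divr_ge0 ?ler0n ?(ltW T_gt0). Qed.

Lemma sum_simple k : (1 <= k <= N.+1)%N -> \sum_i simple N.+1 T k i = T.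
Proof.
move=> /andP[k1 kN]; rewrite /simple -big_mkcond /= -(big_ord_widen _ (fun=> T / k%:R) kN).
by rewrite sumr_const card_ord -[LHS]mulr_natr divfK // pnatr_eq0 -lt0n.
Qed.

Lemma simple_feasible k : (1 <= k <= N.+1)%N -> feasible T (simple N.+1 T k).
Proof.
move=> k_range; split; [exact: simple_nonincreasing | split; first exact: simple_ge0].
by rewrite sum_simple.
Qed.

Lemma simple_sdec k : (1 <= k <= N)%N -> sdec (xalloc (simple N.+1 T k)).
Proof.
move=> /andP[k1 kN]; apply: xalloc_sdec; first exact: simple_nonincreasing.
exists ord_max; rewrite /simple /= ltnNge kN (leq_trans _ k1) // eq_sym.
by rewrite mulf_neq0 ?invr_eq0 ?pnatr_eq0 -?lt0n ?gt_eqF.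
Qed.

Lemma xalloc_simple_full : xalloc (simple N.+1 T N.+1) = fun=> T / N.+1%:R.
Proof. by apply/funext => p; apply: xalloc_const => i; rewrite /simple ltn_ord. Qed.

Lemma xalloc_simple_xi k p : (k <= N.+1)%N -> xalloc (simple N.+1 T k) p = T * xi N.+1 k p.
Proof. by move=> kN; rewrite xalloc_simple // xi_binom_cdf // mulrA. Qed.

End SimpleContests.

Lemma xi_full {R : realType} N (p : R) : xi N.+1 N.+1 p = N.+1%:R^-1.
Proof. by rewrite xi_binom_cdf // binom_cdf_all mulr1. Qed.

Lemma binom_cdf_xi {R : realType} N k (p : R) : (1 <= k <= N.+1)%N ->
  binom_cdf N k p = k%:R * xi N.+1 k p.
Proof. by move=> /andP[k1 kN]; rewrite xi_binom_cdf // mulVKf // pnatr_eq0 -lt0n. Qed.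

Lemma xalloc_const_or_sdec {R : realType} N (w : 'I_N.+1 -> R) : nonincreasing w ->
  (forall i, w i = w ord0) \/ (exists i, w i != w ord0) /\ sdec (xalloc w).
Proof.
move=> w_nonincr; have [/forallP w_const|/forallPn[i wi]] := boolP [forall i, w i == w ord0].
  by left => i; apply/eqP.
by right; split; [exists i | apply: xalloc_sdec => //; exists i].
Qed.

Section BestResponse.
Context {R : realType} {m N : nat} (T : 'I_m -> R) (W : 'I_m -> 'I_N.+1 -> R).
Variables (j : 'I_m) (th : R).
Hypotheses (th01 : 0 <= th <= 1) (Tj_gt0 : 0 < T j).
Hypothesis feasible_others : forall j', j' != j -> feasible (T j') (W j').

Let X j' := xalloc (W j').
Let Phi_w (w : 'I_N.+1 -> R) := Phi_alloc (upd_alloc X j (xalloc w)) j th.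
Let Phi_k k := Phi_w (simple N.+1 (T j) k).

(* The least maximizer matters when it is [N.+1]: every smaller [k] is then strictly
   worse, which makes the comparison with the constant contest [simple N.+1] strict. *)
Definition least_argmax_xi (phi : R) k := least_argmax (fun k => xi N.+1 k phi) N.+1 k.

Lemma others_nonsdec_const : other_nonsdec_const X j.
Proof.
move=> j' j'j j'_nsdec p; have [w_nonincr _] := feasible_others j'j.
have [w_const|[_ w_sdec]] := xalloc_const_or_sdec w_nonincr; last by [].
by rewrite /X !(xalloc_const _ w_const).
Qed.

Lemma Phi_le_simple_const (c : R) k : c <= T j / N.+1%:R ->
  least_argmax_xi (Phi_alloc (upd_alloc X j (fun=> c)) j th) k ->
  Phi_alloc (upd_alloc X j (fun=> c)) j th <= Phi_k k.
Proof.
set phi := Phi_alloc _ j th => c_le [/andP[k1 kN] xi_max _].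
rewrite /Phi_k /Phi_w; move: kN; rewrite leq_eqVlt => /orP[/eqP->|kN].
  by rewrite xalloc_simple_full; exact: Phi_le_const_const.
apply: Phi_le_const_sdec => //; [by apply: simple_sdec; rewrite ?k1 | exact: xalloc_continuous |].
rewrite -/phi xalloc_simple_xi 1?ltnW // (le_trans c_le) // ler_wpM2l ?(ltW Tj_gt0) //.
by rewrite -(xi_full N phi) xi_max ?leqnn.
Qed.

Lemma Phi_le_simple_sdec w k : nonincreasing w -> (forall i, 0 <= w i) ->
  \sum_i w i <= T j -> (exists i, w i != w ord0) -> sdec (xalloc w) ->
  least_argmax_xi (Phi_w w) k -> Phi_w w <= Phi_k k.
Proof.
move=> w_nonincr w_ge0 w_sum w_nonconst w_sdec [/andP[k1 kN] xi_max xi_least].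
rewrite /Phi_k /Phi_w; set phi := Phi_alloc _ j th.
move: kN; rewrite leq_eqVlt => /orP[/eqP k_full|kN].
  rewrite k_full xalloc_simple_full; apply: Phi_le_sdec_const => //.
  - by case/andP: th01.
  - exact: others_nonsdec_const.
  - exact: xalloc_continuous.
  apply: lt_le_trans (xalloc_lt_sum (M := N.+1%:R^-1) w_nonincr w_ge0 w_nonconst _ _) _.
  - move=> k' /andP[k'1 k'N]; rewrite binom_cdf_xi ?k'1 ?(leq_trans k'N) //.
    rewrite ltr_pM2l ?ltr0n // -(xi_full N phi).
    by have := xi_least k'; rewrite k_full k'1 ltnS k'N; apply.
  - by rewrite binom_cdf_all mulfV ?pnatr_eq0.
  - by rewrite mulrC ler_wpM2r ?invr_ge0 ?ler0n.
apply: Phi_le_sdec_sdec => //; [by case/andP: th01 | exact: xalloc_continuous |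
  by apply: simple_sdec; rewrite ?k1 | exact: xalloc_continuous |].
rewrite -/phi xalloc_simple_xi 1?ltnW //.
apply: le_trans (xalloc_le_sum (M := xi N.+1 k phi) w_nonincr w_ge0 _) _.
  by move=> k' k'_range; rewrite binom_cdf_xi // ler_wpM2l ?ler0n ?xi_max.
have xi_k_ge0 : 0 <= xi N.+1 k phi.
  have := xi_max N.+1; rewrite xi_full leqnn => /(_ isT); apply: le_trans.
  by rewrite invr_ge0 ler0n.
by rewrite mulrC ler_wpM2r.
Qed.

Lemma Phi_le_least_argmax w k : feasible (T j) w ->
  least_argmax_xi (Phi_w w) k -> Phi_w w <= Phi_k k.
Proof.
move=> [w_nonincr [w_ge0 w_sum]].
have [w_const|[w_nonconst w_sdec]] := xalloc_const_or_sdec w_nonincr; last first.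
  exact: Phi_le_simple_sdec.
have -> : Phi_w w = Phi_alloc (upd_alloc X j (fun=> w ord0)) j th.
  by rewrite /Phi_w (_ : xalloc w = fun=> w ord0) //; apply/funext => p; exact: xalloc_const.
apply: Phi_le_simple_const; rewrite ler_pdivlMr ?ltr0n // mulr_natr.
by rewrite -(card_ord N.+1) -sumr_const (eq_bigr _ (fun i _ => esym (w_const i))).
Qed.

Lemma best_simple_contest : exists k, [/\ (1 <= k <= N.+1)%N,
  forall w, feasible (T j) w -> Phi_w w <= Phi_k k
  & forall k', (1 <= k' <= N.+1)%N -> xi N.+1 k' (Phi_k k) <= xi N.+1 k (Phi_k k)].
Proof.
have [k1 [k1_range Phi_k1_max _]] := @exists_least_argmax _ Phi_k N.+1 isT.
have [k k_argmax] := @exists_least_argmax _ (fun k => xi N.+1 k (Phi_k k1)) N.+1 isT.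
have Phi_k_eq : Phi_k k = Phi_k k1.
  case: k_argmax (k_argmax) => k_range _ _ k_argmax.
  apply/le_anti; rewrite Phi_k1_max //=.
  by apply: Phi_le_least_argmax; first exact: simple_feasible.
case: k_argmax => k_range xi_max _; exists k; split=> // [w w_feas|]; rewrite Phi_k_eq //.
have [k' k'_argmax] := @exists_least_argmax _ (fun k => xi N.+1 k (Phi_w w)) N.+1 isT.
apply: le_trans (Phi_le_least_argmax w_feas k'_argmax) _.
by case: k'_argmax => k'_range _ _; exact: Phi_k1_max.
Qed.

End BestResponse.

Theorem theorem4 (R : realType) (m n : nat) (T : 'I_m -> R)
  (W : 'I_m -> 'I_n -> R) (j : 'I_m) (theta : R) :
  (2 <= n)%N ->
  0 <= theta <= 1 ->
  0 < T j ->
  (forall j' : 'I_m, j' != j -> feasible (T j') (W j')) ->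
  exists kstar : nat,
    [/\ (1 <= kstar <= n)%N,
        (forall w : 'I_n -> R, feasible (T j) w ->
           Rhat (upd W j w) j theta <= Rhat (upd W j (simple n (T j) kstar)) j theta) &
        (forall k : nat, (1 <= k <= n)%N ->
           xi n k (Phi (upd W j (simple n (T j) kstar)) j theta)
           <= xi n kstar (Phi (upd W j (simple n (T j) kstar)) j theta))].
Proof.
case: n W => [//|N] W _ th01 Tj_gt0 feasible_others.
have [k [k_range Phi_max xi_max]] := best_simple_contest th01 Tj_gt0 feasible_others.
exists k; split=> // [w w_feas|k' k'_range]; rewrite /Rhat !PhiE_alloc !upd_allocE.
  by rewrite ler_wpM2l ?ler0n ?Phi_max.
exact: xi_max.
Qed.
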